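(* Let $\mathcal A,\mathcal B>0$, $\alpha,\beta\in(0,1)$, $h,\tau>0$, and for a real number $\theta$ let $s=\sin^2(\theta h/2)$, $$\mathcal Q=\Big[1-\tfrac{8}{45}s^2\Big]+4g_0^{(\alpha,\beta)}s\Big[1+\tfrac13 s\Big],\qquad \mathcal P=\Big[1-\tfrac{8}{45}s^2\Big]-4g_1^{(\alpha,\beta)}s\Big[1+\tfrac13 s\Big].$$ Then $\left|\mathcal P/\mathcal Q\right|\le1$ for every real $\theta$.
   Context: $\varpi_\ell^{(\sigma)}=(-1)^\ell\binom{\sigma}{\ell}$, $g_0^{(\sigma)}=\frac{1+\sigma}{2}\varpi_0^{(\sigma)}$, $g_\ell^{(\sigma)}=\frac{1+\sigma}{2}\varpi_\ell^{(\sigma)}+\frac{1-\sigma}{2}\varpi_{\ell-1}^{(\sigma)}$ ($\ell\ge1$); $\mu_\alpha=\tau^\alpha\mathcal A/h^2$, $\mu_\beta=\tau^\beta\mathcal B/h^2$, $g_\ell^{(\alpha,\beta)}=\mu_\alpha g_\ell^{(1-\alpha)}+\mu_\beta g_\ell^{(1-\beta)}$. *)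

From Stdlib Require Import Reals.
Open Scope R_scope.

Fixpoint gbinom (s : R) (l : nat) : R :=
  match l with
  | O => 1
  | S k => gbinom s k * (s - INR k) / INR (S k)
  end.

Definition varpi (sigma : R) (l : nat) : R := (-1) ^ l * gbinom sigma l.

Definition gcoef (sigma : R) (l : nat) : R :=
  match l with
  | O => (1 + sigma) / 2 * varpi sigma 0
  | S k => (1 + sigma) / 2 * varpi sigma (S k) + (1 - sigma) / 2 * varpi sigma k
  end.

Definition mu (tau a A h : R) : R := Rpower tau a * A / h ^ 2.

Definition gab (A B alpha beta h tau : R) (l : nat) : R :=
  mu tau alpha A h * gcoef (1 - alpha) l + mu tau beta B h * gcoef (1 - beta) l.

(** For σ ∈ [0, 1] the first two coefficients satisfy |g_1^{(σ)}| <= g_0^{(σ)}, since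
    g_0 + g_1 = (1 - σ)(2 + σ)/2 and g_0 - g_1 = σ(3 + σ)/2.  The weights μ_α, μ_β are
    positive, so |g_1^{(α,β)}| <= g_0^{(α,β)} as well.  Writing D = 1 - 8 s²/45 > 0 and
    T = 4 s (1 + s/3) >= 0 (as 0 <= s <= 1), we get Q = D + g_0 T and P = D - g_1 T,
    whence |P| <= D + |g_1| T <= Q. *)
From Stdlib Require Import Reals Lra Psatz.
Open Scope R_scope.

Lemma gcoef_0 (sigma : R) : gcoef sigma 0 = (1 + sigma) / 2.
Proof. unfold gcoef, varpi; simpl; field. Qed.

Lemma gcoef_1 (sigma : R) : gcoef sigma 1 = (1 - 2 * sigma - sigma ^ 2) / 2.
Proof. unfold gcoef, varpi; simpl; field. Qed.

Lemma Rabs_gcoef_1_le (sigma : R) :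
  0 <= sigma <= 1 -> Rabs (gcoef sigma 1) <= gcoef sigma 0.
Proof.
  intros Hsigma; rewrite gcoef_0, gcoef_1.
  apply Rabs_le; split; nra.
Qed.

Lemma mu_pos (tau a A h : R) : 0 < tau -> 0 < A -> 0 < h -> 0 < mu tau a A h.
Proof.
  intros Htau HA Hh; unfold mu, Rpower, Rdiv.
  apply Rmult_lt_0_compat.
  - apply Rmult_lt_0_compat; [apply exp_pos | exact HA].
  - apply Rinv_0_lt_compat, pow_lt, Hh.
Qed.

Lemma Rabs_combination_le (m1 m2 x0 x1 y0 y1 : R) :
  0 <= m1 -> 0 <= m2 -> Rabs x1 <= x0 -> Rabs y1 <= y0 ->
  Rabs (m1 * x1 + m2 * y1) <= m1 * x0 + m2 * y0.
Proof.
  intros Hm1 Hm2 Hx Hy.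
  pose proof (Rle_abs x1); pose proof (Rle_abs (- x1)).
  pose proof (Rle_abs y1); pose proof (Rle_abs (- y1)).
  rewrite Rabs_Ropp in *.
  apply Rabs_le; split; nra.
Qed.

Lemma Rabs_gab_1_le (A B alpha beta h tau : R) :
  0 < A -> 0 < B -> 0 < alpha < 1 -> 0 < beta < 1 -> 0 < h -> 0 < tau ->
  Rabs (gab A B alpha beta h tau 1) <= gab A B alpha beta h tau 0.
Proof.
  intros HA HB Halpha Hbeta Hh Htau; unfold gab.
  apply Rabs_combination_le.
  - left; apply mu_pos; assumption.
  - left; apply mu_pos; assumption.
  - apply Rabs_gcoef_1_le; lra.
  - apply Rabs_gcoef_1_le; lra.
Qed.

Lemma Rabs_ratio_le_1 (D T g0 g1 : R) :
  0 < D -> 0 <= T -> Rabs g1 <= g0 ->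
  Rabs ((D - g1 * T) / (D + g0 * T)) <= 1.
Proof.
  intros HD HT Hg.
  pose proof (Rle_abs g1); pose proof (Rle_abs (- g1)).
  rewrite Rabs_Ropp in *.
  assert (HQ : 0 < D + g0 * T) by nra.
  unfold Rdiv; rewrite Rabs_mult, Rabs_inv, (Rabs_right (D + g0 * T)) by lra.
  apply (Rmult_le_reg_r (D + g0 * T)); [exact HQ|].
  rewrite Rmult_assoc, Rinv_l, Rmult_1_r, Rmult_1_l by lra.
  apply Rabs_le; split; nra.
Qed.

Lemma sin_sqr_bounds (x : R) : 0 <= sin x ^ 2 <= 1.
Proof.
  pose proof (sin2 x) as Hsin2; pose proof (pow2_ge_0 (cos x)).
  unfold Rsqr in Hsin2; simpl in *; nra.
Qed.

Theorem lemma5 (A B alpha beta h tau : R) :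
  0 < A -> 0 < B -> 0 < alpha < 1 -> 0 < beta < 1 -> 0 < h -> 0 < tau ->
  forall theta : R,
    let s := sin (theta * h / 2) ^ 2 in
    let Q := (1 - 8 / 45 * s ^ 2) + 4 * gab A B alpha beta h tau 0 * s * (1 + 1 / 3 * s) in
    let P := (1 - 8 / 45 * s ^ 2) - 4 * gab A B alpha beta h tau 1 * s * (1 + 1 / 3 * s) in
    Rabs (P / Q) <= 1.
Proof.
  intros HA HB Halpha Hbeta Hh Htau theta s Q P.
  assert (Hs : 0 <= s <= 1) by apply sin_sqr_bounds.
  set (g0 := gab A B alpha beta h tau 0) in *.
  set (g1 := gab A B alpha beta h tau 1) in *.
  set (D := 1 - 8 / 45 * s ^ 2).
  set (T := 4 * s * (1 + 1 / 3 * s)).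
  replace (P / Q) with ((D - g1 * T) / (D + g0 * T))
    by (unfold P, Q, D, T; f_equal; ring).
  apply Rabs_ratio_le_1.
  - unfold D; nra.
  - unfold T; nra.
  - apply Rabs_gab_1_le; assumption.
Qed.
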